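(* Assume the penalty is $D(\hat\mu,P_{s,a})=\sup_{V\in\mathbb R^{\mathcal S}}\big(-\sigma(P_{s,a},V)-\mathbb E_{s'\sim\hat\mu}V(s')\big)$ for all $s,a$ and $\hat\mu\in\Delta(\mathcal S)$. Then for every stationary policy $\pi$, $$\overline V^\star=\widetilde V^\star,\quad \overline V^\pi=\widetilde V^\pi,\quad \overline Q^\star=\widetilde Q^\star,\quad \overline Q^\pi=\widetilde Q^\pi.$$ Writing $V^\star,V^\pi$ for these common values, for every initial state the supremum–infimum defining $\overline V^\star$ is attained by choosing actions via the deterministic stationary policy $\pi^\star(s)\in\arg\max_a\big(r(s,a)-\gamma\sigma(P_{s,a},V^\star)\big)$ and the stationary transition kernel (the same at every time $t$) $\hat P^\star_{s,a}\in\arg\min_{\hat\mu\in\Delta(\mathcal S)}\big(D(\hat\mu,P_{s,a})+\mathbb E_{s'\sim\hat\mu}V^\star(s')\big)$; and the infimum defining $\overline V^\pi$ is attained by the stationary kernel $\hat P^\pi_{s,a}\in\arg\min_{\hat\mu\in\Delta(\mathcal S)}\big(D(\hat\mu,P_{s,a})+\mathbb E_{s'\sim\hat\mu}V^\pi(s')\big)$ used at every time $t$.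
   Context: $\mathcal S$ and $\mathcal A$ are finite sets; $\Delta(\mathcal X)$ denotes the probability simplex over a finite set $\mathcal X$. $P=\{P_{s,a}\}$ with $P_{s,a}\in\Delta(\mathcal S)$ is the nominal transition kernel, $r:\mathcal S\times\mathcal A\to[0,1]$, $\gamma\in[0,1)$. A stationary policy is a map $\pi:\mathcal S\to\Delta(\mathcal A)$. A function $\sigma:\mathbb R^{\mathcal S}\to\mathbb R$ is a convex risk measure if (i) $V'\le V$ pointwise implies $\sigma(V)\le\sigma(V')$; (ii) $\sigma(V+m)=\sigma(V)-m$ for every constant $m$; (iii) $\sigma$ is convex. For each $(s,a)$ a convex risk measure $\sigma(P_{s,a},\cdot)$ is given. It is known (dual representation) that with $D$ as in the claim, $\sigma(P_{s,a},V)=\sup_{\hat\mu\in\Delta(\mathcal S)}(-\mathbb E_{\hat\mu}V-D(\hat\mu,P_{s,a}))$, and $D(\cdot,P_{s,a})$ is convex and lower semicontinuous. Risk-sensitive values: $\widetilde V^\pi$ is the unique solution of $\widetilde V^\pi(s)=\sum_a\pi(a|s)(r(s,a)-\gamma\sigma(P_{s,a},\widetilde V^\pi))$, $\widetilde V^\star$ the unique solution of $\widetilde V^\star(s)=\max_a(r(s,a)-\gamma\sigma(P_{s,a},\widetilde V^\star))$, $\widetilde Q^\pi(s,a)=r(s,a)-\gamma\sigma(P_{s,a},\widetilde V^\pi)$, $\widetilde Q^\star(s,a)=r(s,a)-\gamma\sigma(P_{s,a},\widetilde V^\star)$. Regularized robust values: an adversary picks a sequence $\{\hat P_t\}_{t\ge0}$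 of (time-dependent) transition kernels $\hat P_{t;s,a}\in\Delta(\mathcal S)$; trajectories evolve by $s_{t+1}\sim\hat P_{t;s_t,a_t}$. Then $\overline V^\pi(s)=\inf_{\{\hat P_t\}}\mathbb E\big[\sum_{t\ge0}\gamma^t\big(r(s_t,a_t)+\gamma D(\hat P_{t;s_t,a_t},P_{s_t,a_t})\big)\mid s_0=s\big]$ with $a_t\sim\pi(\cdot|s_t)$; $\overline V^\star(s)$ is the same expression with $\sup$ over all (possibly history-dependent) action choices $\{a_t\}_{t\ge0}$ placed before the $\inf$; $\overline Q^\pi(s,a)$ and $\overline Q^\star(s,a)$ are defined identically but with $a_0=a$ fixed (and actions $a_t$, $t\ge1$, drawn from $\pi$, resp. supremized). *)

From HB Require Import structures.
From mathcomp Require Import all_boot all_order all_algebra.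
From mathcomp Require Import all_classical all_reals all_analysis.

Set Implicit Arguments.
Unset Strict Implicit.
Unset Printing Implicit Defensive.

Import Order.TTheory GRing.Theory Num.Theory.
Local Open Scope classical_set_scope.
Local Open Scope ring_scope.

Definition is_dist (R : realType) (X : finType) (mu : X -> R) : Prop :=
  (forall x, 0 <= mu x) /\ \sum_(x : X) mu x = 1.

Definition expect (R : realType) (X : finType) (mu V : X -> R) : R :=
  \sum_(x : X) mu x * V x.

Definition convex_risk_measure (R : realType) (S : finType)
    (rho : (S -> R) -> R) : Prop :=
  [/\ (forall V V' : S -> R, (forall s, V' s <= V s) -> rho V <= rho V'),
      (forall (V : S -> R) (m : R), rho (fun s => V s + m) = rho V - m) &
      (forall (V V' : S -> R) (l : R), 0 <= l <= 1 ->
         rho (fun s => l * V s + (1 - l) * V' s) <= l * rho V + (1 - l) * rho V')].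

Definition penalty (R : realType) (S : finType)
    (sigma : (S -> R) -> (S -> R) -> R) (p muh : S -> R) : \bar R :=
  ereal_sup [set ((- sigma p V - expect muh V)%R)%:E | V in [set: S -> R]].

(* A (general, randomized, history-dependent) action rule:
   pol h x a = probability of choosing action a in current state x after the
   history h.  Histories are lists of past (state, action) pairs, MOST RECENT
   FIRST; the time index of the current step equals size h. *)
Definition hpolicy (S A : finType) (R : realType) := seq (S * A) -> S -> A -> R.

Definition kseq (S A : finType) (R : realType) := nat -> S -> A -> S -> R.

Definition admissible_kseq (R : realType) (S A : finType) (Pt : kseq S A R)
  : Prop := forall t s a, is_dist (Pt t s a).

Fixpoint hprob (R : realType) (S A : finType) (pol : hpolicy S A R)
    (Pt : kseq S A R) (s0 : S) (h : seq (S * A)) (s : S) : R :=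
  match h with
  | [::] => (s == s0)%:R
  | (x, a) :: h' =>
      hprob pol Pt s0 h' x * pol h' x a * Pt (size h') x a s
  end.

Definition stage_cost (R : realType) (S A : finType)
    (P : S -> A -> S -> R) (r : S -> A -> R) (gamma : R)
    (sigma : (S -> R) -> (S -> R) -> R) (Pt : kseq S A R) (t : nat)
    (s : S) (a : A) : \bar R :=
  ((r s a)%:E + gamma%:E * penalty sigma (P s a) (Pt t s a))%E.

Definition exp_cost (R : realType) (S A : finType)
    (P : S -> A -> S -> R) (r : S -> A -> R) (gamma : R)
    (sigma : (S -> R) -> (S -> R) -> R) (pol : hpolicy S A R)
    (Pt : kseq S A R) (s0 : S) (t : nat) : \bar R :=
  (\sum_(h : t.-tuple (S * A)) \sum_(s : S) \sum_(a : A)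
     (hprob pol Pt s0 h s * pol h s a)%:E
       * stage_cost P r gamma sigma Pt t s a)%E.

Definition total_cost (R : realType) (S A : finType)
    (P : S -> A -> S -> R) (r : S -> A -> R) (gamma : R)
    (sigma : (S -> R) -> (S -> R) -> R) (pol : hpolicy S A R)
    (Pt : kseq S A R) (s0 : S) : \bar R :=
  (\sum_(t <oo) (gamma ^+ t)%:E * exp_cost P r gamma sigma pol Pt s0 t)%E.

Definition adv_inf (R : realType) (S A : finType)
    (P : S -> A -> S -> R) (r : S -> A -> R) (gamma : R)
    (sigma : (S -> R) -> (S -> R) -> R) (pol : hpolicy S A R) (s0 : S)
  : \bar R :=
  ereal_inf [set total_cost P r gamma sigma pol Pt s0 | Pt in [set Pt : kseq S A R | admissible_kseq Pt]].

Definition is_policy (R : realType) (S A : finType) (pi : S -> A -> R) : Prop :=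
  forall s, is_dist (pi s).

Definition stat_pol (R : realType) (S A : finType) (pi : S -> A -> R)
  : hpolicy S A R := fun _ x a => pi x a.

Definition det_pol (R : realType) (S A : finType) (f : seq (S * A) -> S -> A)
  : hpolicy S A R := fun h x a => (a == f h x)%:R.

Definition first_then (R : realType) (S A : finType) (a0 : A)
    (pol : hpolicy S A R) : hpolicy S A R :=
  fun h x a => if h is [::] then (a == a0)%:R else pol h x a.

Definition Vbar_pi (R : realType) (S A : finType) (P : S -> A -> S -> R)
    (r : S -> A -> R) (gamma : R) (sigma : (S -> R) -> (S -> R) -> R)
    (pi : S -> A -> R) (s : S) : \bar R :=
  adv_inf P r gamma sigma (stat_pol pi) s.

Definition Qbar_pi (R : realType) (S A : finType) (P : S -> A -> S -> R)
    (r : S -> A -> R) (gamma : R) (sigma : (S -> R) -> (S -> R) -> R)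
    (pi : S -> A -> R) (s : S) (a : A) : \bar R :=
  adv_inf P r gamma sigma (first_then a (stat_pol pi)) s.

Definition Vbar_star (R : realType) (S A : finType) (P : S -> A -> S -> R)
    (r : S -> A -> R) (gamma : R) (sigma : (S -> R) -> (S -> R) -> R)
    (s : S) : \bar R :=
  ereal_sup [set adv_inf P r gamma sigma (@det_pol R S A f) s
            | f in [set: seq (S * A) -> S -> A]].

Definition Qbar_star (R : realType) (S A : finType) (P : S -> A -> S -> R)
    (r : S -> A -> R) (gamma : R) (sigma : (S -> R) -> (S -> R) -> R)
    (s : S) (a : A) : \bar R :=
  ereal_sup [set adv_inf P r gamma sigma (first_then a (@det_pol R S A f)) s
            | f in [set: seq (S * A) -> S -> A]].

Definition Qtilde (R : realType) (S A : finType) (P : S -> A -> S -> R)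
    (r : S -> A -> R) (gamma : R) (sigma : (S -> R) -> (S -> R) -> R)
    (V : S -> R) (s : S) (a : A) : R :=
  r s a - gamma * sigma (P s a) V.

Definition is_Vtilde_pi (R : realType) (S A : finType) (P : S -> A -> S -> R)
    (r : S -> A -> R) (gamma : R) (sigma : (S -> R) -> (S -> R) -> R)
    (pi : S -> A -> R) (V : S -> R) : Prop :=
  forall s, V s = \sum_(a : A) pi s a * Qtilde P r gamma sigma V s a.

Definition is_Vtilde_star (R : realType) (S A : finType) (P : S -> A -> S -> R)
    (r : S -> A -> R) (gamma : R) (sigma : (S -> R) -> (S -> R) -> R)
    (V : S -> R) : Prop :=
  forall s, (exists a, V s = Qtilde P r gamma sigma V s a) /\
            (forall a, Qtilde P r gamma sigma V s a <= V s).

Definition is_argmin_kernel (R : realType) (S : finType)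
    (sigma : (S -> R) -> (S -> R) -> R) (p : S -> R) (V : S -> R)
    (muh : S -> R) : Prop :=
  is_dist muh /\
  forall mu, is_dist mu ->
    (penalty sigma p muh + (expect muh V)%:E <= penalty sigma p mu + (expect mu V)%:E)%E.

From HB Require Import structures.
From mathcomp Require Import all_boot all_order all_algebra.
From mathcomp Require Import all_classical all_reals all_analysis.
From mathcomp Require Import ring lra.
Import Order.TTheory GRing.Theory Num.Theory.
Import numFieldNormedType.Exports.
Local Open Scope classical_set_scope.
Local Open Scope ring_scope.
Set Implicit Arguments.
Unset Strict Implicit.
Unset Printing Implicit Defensive.

(* The penalty is the convex conjugate of the risk measure, and in finite
   dimension a convex risk measure has at every [V] a subgradient [- mu] with
   [mu] a probability vector (Hahn-Banach, extending a linear minorant one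
   coordinate at a time).  Hence the supremum defining [D(mu, p)] is attained
   and [- sigma(p, V) = min_mu (D(mu, p) + E_mu V)].  Consequently, against any
   adversary the stage cost at time [t] dominates
   [E Q_V(s_t, a_t) - gamma E V(s_{t+1})], with equality on an argmin kernel.
   If after the first step the policy's average of [Q_V] is [>= V] (resp.
   [<= V]), the discounted sum telescopes and is [>=] (resp. [<=], for the
   argmin kernel) the first-step average of [Q_V].  Applied to [V*] with
   arbitrary deterministic rules and with a greedy one, and to [V^pi] with the
   stationary policy, this gives every identity. *)

Lemma expect_lin (R : realType) (S : finType) (mu U W : S -> R) (a b : R) :
  expect mu (fun s => a * U s + b * W s) = a * expect mu U + b * expect mu W.
Proof. by rewrite /expect !mulr_sumr -big_split /=; apply: eq_bigr => s _; ring. Qed.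

Lemma expectB (R : realType) (S : finType) (mu U W : S -> R) :
  expect mu (fun s => U s - W s) = expect mu U - expect mu W.
Proof. by rewrite /expect -sumrB; apply: eq_bigr => s _; ring. Qed.

Lemma expectNl (R : realType) (S : finType) (mu W : S -> R) :
  expect (fun s => - mu s) W = - expect mu W.
Proof. by rewrite /expect -sumrN; apply: eq_bigr => s _; ring. Qed.

Lemma expect_cst (R : realType) (S : finType) (mu : S -> R) (c : R) :
  expect mu (fun _ => c) = (\sum_s mu s) * c.
Proof. by rewrite /expect mulr_suml. Qed.

Lemma sum_indicator (R : realType) (T : finType) (t0 : T) (G : T -> R) :
  \sum_(t : T) (t == t0)%:R * G t = G t0.
Proof.
rewrite (bigD1 t0) //= eqxx mul1r big1 ?addr0 // => t /negPf ->.
by rewrite mul0r.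
Qed.

Lemma expect_indicator (R : realType) (S : finType) (mu : S -> R) (s0 : S) :
  expect mu (fun s => (s == s0)%:R) = mu s0.
Proof.
by rewrite /expect -(sum_indicator s0 mu); apply: eq_bigr => s _; rewrite mulrC.
Qed.

Lemma indicator_dist (R : realType) (T : finType) (t0 : T) :
  is_dist (fun t : T => ((t == t0)%:R : R)).
Proof.
split; first by move=> t; rewrite ler0n.
by rewrite (bigD1 t0) //= eqxx big1 ?addr0 // => t /negPf ->.
Qed.

Definition supported_on (R : realType) (S : finType) (X : seq S) (W : S -> R) :=
  forall s, s \notin X -> W s = 0.

Section ConvexMinorant.
Variables (R : realType) (S : finType) (F : (S -> R) -> R).
Hypothesis F_convex : forall (U W : S -> R) (l : R), 0 <= l <= 1 ->
  F (fun s => l * U s + (1 - l) * W s) <= l * F U + (1 - l) * F W.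
Variables (X : seq S) (g : S -> R) (e : S).
Hypothesis g_minorant : forall W, supported_on X W -> expect g W <= F W.

Local Notation e1 := (fun s : S => (s == e)%:R : R).

(* [g_minorant] at the convex combination of [m2 - u e] and [m1 + t e] in
   which [e] cancels. *)
Lemma minorant_slope_le (m1 m2 : S -> R) (u t : R) :
  supported_on X m1 -> supported_on X m2 -> 0 < u -> 0 < t ->
  (expect g m2 - F (fun s => m2 s - u * e1 s)) / u <=
  (F (fun s => m1 s + t * e1 s) - expect g m1) / t.
Proof.
move=> m1X m2X u0 t0.
rewrite ler_pdivrMr // mulrAC ler_pdivlMr //.
have ut0 : 0 < u + t by rewrite addr_gt0.
have utn : u + t != 0 by rewrite gt_eqF.
pose l := t / (u + t).
have l01 : 0 <= l <= 1.
  rewrite /l; apply/andP; split; first by rewrite divr_ge0 // ltW.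
  by rewrite ler_pdivrMr // mul1r lerDr ltW.
have := F_convex (fun s => m2 s - u * e1 s) (fun s => m1 s + t * e1 s) l01.
have -> : (fun s => l * (m2 s - u * e1 s) + (1 - l) * (m1 s + t * e1 s)) =
          (fun s => l * m2 s + (1 - l) * m1 s).
  by apply/funext => s; rewrite /l; field.
have mX : supported_on X (fun s => l * m2 s + (1 - l) * m1 s).
  by move=> s sX; rewrite m1X // m2X // !mulr0 addr0.
move: (g_minorant mX); rewrite expect_lin => hg hF.
have mix v w : (u + t) * (l * v + (1 - l) * w) = t * v + u * w.
  by rewrite /l; field.
have := le_trans hg hF; rewrite -(ler_pM2l ut0) !mix; nra.
Qed.

(* Any coefficient of [e] between all left and all right slopes extends [g];
   take the supremum of the left slopes. *)
Lemma minorant_extend :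
  exists g' : S -> R, forall W, supported_on (e :: X) W -> expect g' W <= F W.
Proof.
pose L := [set x : R | exists m u, [/\ supported_on X m, 0 < u &
   x = (expect g m - F (fun s => m s - u * e1 s)) / u]].
have L_ub m t : supported_on X m -> 0 < t ->
    ubound L ((F (fun s => m s + t * e1 s) - expect g m) / t).
  by move=> mX t0 _ [m' [u [m'X u0 ->]]]; exact: minorant_slope_le.
have L0 : L !=set0.
  exists ((expect g (fun _ => 0) - F (fun s => 0 - 1 * e1 s)) / 1).
  by exists (fun _ => 0), 1; split.
have Lsup : has_sup L.
  split=> //; eexists; exact: (L_ub (fun _ => 0) 1 (fun _ _ => erefl) ltr01).
pose c := sup L.
exists (fun s => if s == e then c else g s) => W WX.
pose w := W e; pose m s := if s == e then 0 else W s.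
have mX : supported_on X m.
  move=> s sX; rewrite /m; case: eqP => // /eqP se.
  by apply: WX; rewrite in_cons negb_or se.
have WE : W = (fun s => m s + w * e1 s).
  apply/funext => s; rewrite /m /w.
  by case: eqP => [->|_]; rewrite ?mulr1 ?add0r ?mulr0 ?addr0.
have -> : expect (fun s => if s == e then c else g s) W = expect g m + c * w.
  rewrite /expect (bigD1 e) //= eqxx [in RHS](bigD1 e) //= /m eqxx mulr0 add0r addrC.
  by congr (_ + _); apply: eq_bigr => s /negPf ->.
case: (ltgtP w 0) => hw.
- have inL : L ((expect g m - F (fun s => m s - (- w) * e1 s)) / (- w)).
    by exists m, (- w); rewrite oppr_gt0.
  have := sup_upper_bound Lsup inL; rewrite -/c.
  have -> : (fun s => m s - (- w) * e1 s) = W by rewrite WE; apply/funext => s; ring.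
  rewrite ler_pdivrMr ?oppr_gt0 // => h; nra.
- have := ge_sup L0 (L_ub m w mX hw); rewrite -/c -WE ler_pdivlMr // => h; nra.
- have := g_minorant mX.
  have -> : m = W by rewrite WE hw; apply/funext => s; ring.
  by rewrite hw mulr0 addr0.
Qed.

End ConvexMinorant.

Lemma convex_linear_minorant (R : realType) (S : finType) (F : (S -> R) -> R) :
  (forall (U W : S -> R) (l : R), 0 <= l <= 1 ->
     F (fun s => l * U s + (1 - l) * W s) <= l * F U + (1 - l) * F W) ->
  F (fun _ => 0) = 0 ->
  exists g : S -> R, forall W, expect g W <= F W.
Proof.
move=> F_convex F0.
suff [g hg] : exists g : S -> R, forall W, supported_on (enum S) W -> expect g W <= F W.
  by exists g => W; apply: hg => s; rewrite mem_enum.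
elim: (enum S) => [|e X [g hg]]; last exact: (minorant_extend F_convex e hg).
exists (fun _ => 0) => W W0.
have -> : W = (fun _ => 0) by apply/funext => s; exact: W0.
by rewrite F0 /expect big1 // => s _; rewrite mul0r.
Qed.

(* [- mu] is a linear minorant of [W |-> rho (V + W) - rho V]; monotonicity
   makes [mu] nonnegative and cash invariance makes it sum to one. *)
Lemma risk_measure_subgradient (R : realType) (S : finType)
    (rho : (S -> R) -> R) (V : S -> R) :
  convex_risk_measure rho ->
  exists mu : S -> R, is_dist mu /\
    forall W, - rho W - expect mu W <= - rho V - expect mu V.
Proof.
case=> rho_anti rho_cash rho_convex.
pose F W := rho (fun s => V s + W s) - rho V.
have F_convex U W l : 0 <= l <= 1 ->
    F (fun s => l * U s + (1 - l) * W s) <= l * F U + (1 - l) * F W.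
  move=> l01; rewrite /F.
  have -> : (fun s => V s + (l * U s + (1 - l) * W s)) =
            (fun s => l * (V s + U s) + (1 - l) * (V s + W s)).
    by apply/funext => s; ring.
  have := rho_convex (fun s => V s + U s) (fun s => V s + W s) l l01; lra.
have F0 : F (fun _ => 0) = 0.
  by rewrite /F; under eq_fun do rewrite addr0; rewrite subrr.
have [g g_le] := convex_linear_minorant F_convex F0.
exists (fun s => - g s); split; first split.
- move=> s; rewrite oppr_ge0.
  have := g_le (fun x => (x == s)%:R); rewrite expect_indicator.
  suff : F (fun x => (x == s)%:R) <= 0 by lra.
  by rewrite /F subr_le0; apply: rho_anti => x; rewrite lerDl ler0n.
- have := g_le (fun _ => 1); have := g_le (fun _ => -1).
  rewrite /F !rho_cash !expect_cst sumrN; lra.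
- move=> W; have := g_le (fun s => W s - V s); rewrite /F.
  have -> : (fun s => V s + (W s - V s)) = W by apply/funext => s; ring.
  rewrite expectB !expectNl; lra.
Qed.

Lemma le_penalty (R : realType) (S : finType)
    (sigma : (S -> R) -> (S -> R) -> R) (p mu V : S -> R) :
  ((- sigma p V - expect mu V)%:E <= penalty sigma p mu)%E.
Proof. by apply: ereal_sup_ubound; exists V. Qed.

Lemma penalty_attained (R : realType) (S : finType)
    (sigma : (S -> R) -> (S -> R) -> R) (p V : S -> R) :
  convex_risk_measure (sigma p) ->
  exists mu, is_dist mu /\ penalty sigma p mu = (- sigma p V - expect mu V)%:E.
Proof.
move=> /(risk_measure_subgradient V) [mu [mu_dist mu_sub]].
exists mu; split => //; apply/le_anti; rewrite le_penalty andbT.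
by apply: ge_ereal_sup => _ [W _ <-]; rewrite lee_fin.
Qed.

Lemma argmin_kernel_penalty (R : realType) (S : finType)
    (sigma : (S -> R) -> (S -> R) -> R) (p V muh : S -> R) :
  convex_risk_measure (sigma p) -> is_argmin_kernel sigma p V muh ->
  penalty sigma p muh = (- sigma p V - expect muh V)%:E.
Proof.
move=> /(penalty_attained V) [mu [mu_dist pen_mu]] [_ /(_ mu mu_dist)].
rewrite pen_mu -EFinD; have := le_penalty sigma p muh V.
case: (penalty sigma p muh) => [x| |] //=.
by rewrite -EFinD !lee_fin => h1 h2; congr EFin; lra.
Qed.

Lemma discounted_bounded_cvg0 (R : realType) (a : nat -> R) (g B : R) :
  0 <= g < 1 -> (forall t, `|a t| <= B) ->
  (fun n => g ^+ n.+1 * a n.+1) @ \oo --> (0 : R).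
Proof.
case/andP=> g0 g1 aB.
have gn_cvg : (fun n => g ^+ n.+1) @ \oo --> (0 : R).
  by rewrite (cvg_shiftS (fun n => g ^+ n)); apply: cvg_expr; rewrite ger0_norm.
have cgn_cvg (c : R) : (fun n => c * g ^+ n.+1) @ \oo --> (0 : R).
  by rewrite -(mulr0 c); apply: cvgM => //; exact: cvg_cst.
apply: (squeeze_cvgr _ (cgn_cvg (- B)) (cgn_cvg B)); apply: nearW => n.
have gn0 : 0 <= g ^+ n.+1 by rewrite exprn_ge0.
by rewrite mulNr -ler_norml normrM ger0_norm // [B * _]mulrC ler_wpM2l.
Qed.

Lemma discounted_telescope (R : realType) (a b : nat -> R) (g : R) n :
  \sum_(0 <= t < n.+1) g ^+ t * (b t - g * a t.+1) =
  b 0 - g ^+ n.+1 * a n.+1 +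
    \sum_(0 <= t < n.+1) (if t is 0 then 0 else g ^+ t * (b t - a t)).
Proof.
elim: n => [|n IH]; first by rewrite !big_nat1 /= expr0 expr1; ring.
by rewrite big_nat_recr //= IH [in RHS]big_nat_recr //= !exprS; ring.
Qed.

Lemma lim_succ_EFinD (R : realType) (u v : nat -> \bar R) (y : nat -> R) (l : R) :
  (forall n, u n.+1 = ((y n)%:E + v n)%E) -> y n @[n --> \oo] --> l -> cvgn v ->
  lim (u @ \oo) = (l%:E + lim (v @ \oo))%E.
Proof.
move=> uE y_cvg v_cvg; apply: cvg_lim => //.
rewrite -cvg_shiftS; have -> : [sequence u n.+1]_n = (fun n => (y n)%:E + v n)%E.
  by apply/funext => n; rewrite /= uE.
apply: cvgeD; first exact: fin_num_adde_defr.
- by apply: cvg_EFin; [exact: nearW | exact: y_cvg].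
- exact: v_cvg.
Qed.

(* With [u t >= b t - g a (t + 1)] the discounted series telescopes down to
   [b 0], up to the nonnegative terms [g^t (b t - a t)], [t > 0], and a
   vanishing tail. *)
Lemma discounted_series_ge (R : realType) (u : nat -> \bar R) (a b : nat -> R)
    (g B : R) :
  0 <= g < 1 -> (forall t, `|a t| <= B) ->
  (forall t, ((b t - g * a t.+1)%:E <= u t)%E) ->
  (forall t, (0 < t)%N -> a t <= b t) ->
  ((b 0)%:E <= \sum_(t <oo) (g ^+ t)%:E * u t)%E.
Proof.
move=> g01 aB ub ab; have g0 : 0 <= g by case/andP: g01.
pose c t := b t - g * a t.+1.
pose d t := ((g ^+ t)%:E * u t - (g ^+ t * c t)%:E)%E.
have d0 t : (0 <= d t)%E.
  rewrite /d sube_ge0 ?fin_numE ?orbT // EFinM.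
  by apply: lee_wpmul2l; [rewrite lee_fin exprn_ge0 | exact: ub].
have uE t : ((g ^+ t)%:E * u t = (g ^+ t * c t)%R%:E + d t)%E.
  by rewrite /d addeC subeK.
clearbody d.
pose f t := (d t + (if t is 0 then 0 else g ^+ t * (b t - a t))%:E)%E.
have f0 t : (0 <= f t)%E.
  apply: adde_ge0 => //; case: t => // t.
  by rewrite lee_fin mulr_ge0 ?exprn_ge0 // subr_ge0 ab.
pose y n := b 0 - g ^+ n.+1 * a n.+1.
have partialE n : (\sum_(0 <= t < n.+1) (g ^+ t)%:E * u t =
                   (y n)%:E + \sum_(0 <= t < n.+1) f t)%E.
  rewrite (eq_bigr _ (fun t _ => uE t)) big_split /= sumEFin discounted_telescope.
  by rewrite /f big_split /= sumEFin EFinD addeAC addeA.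
have y_cvg : y n @[n --> \oo] --> b 0.
  have := cvgB (cvg_cst (b 0)) (discounted_bounded_cvg0 g01 aB); rewrite subr0; exact.
have f_cvg : cvgn (fun n => \sum_(0 <= t < n.+1) f t).
  have /cvg_ex [l fl] := is_cvg_nneseries (P := predT) (N := 0) (fun n _ _ => f0 n).
  by apply/cvg_ex; exists l; rewrite -cvg_shiftS in fl.
rewrite (lim_succ_EFinD partialE y_cvg f_cvg); apply: leeDl.
by apply: lime_ge => //; apply: nearW => n; exact: sume_ge0.
Qed.

Lemma discounted_series_le (R : realType) (u : nat -> \bar R) (a b : nat -> R)
    (g B : R) :
  0 <= g < 1 -> (forall t, `|a t| <= B) ->
  (forall t, u t = (b t - g * a t.+1)%:E) ->
  (forall t, (0 < t)%N -> b t <= a t) ->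
  (\sum_(t <oo) (g ^+ t)%:E * u t <= (b 0)%:E)%E.
Proof.
move=> g01 aB uE ba; have g0 : 0 <= g by case/andP: g01.
pose f t : \bar R := (if t is 0 then 0 else g ^+ t * (a t - b t))%:E.
have f0 t : (0 <= f t)%E.
  by case: t => [|t]; rewrite /f lee_fin // mulr_ge0 ?exprn_ge0 // subr_ge0 ba.
pose y n := b 0 - g ^+ n.+1 * a n.+1.
have partialE n : (\sum_(0 <= t < n.+1) (g ^+ t)%:E * u t =
                   (y n)%:E + - \sum_(0 <= t < n.+1) f t)%E.
  under eq_bigr do rewrite uE -EFinM.
  rewrite sumEFin discounted_telescope /f sumEFin -EFinN -EFinD; congr EFin.
  rewrite /y -sumrN; congr (_ + _); apply: eq_bigr => -[|t] _ //=.
    by rewrite oppr0.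
  by rewrite -mulrN opprB.
have y_cvg : y n @[n --> \oo] --> b 0.
  have := cvgB (cvg_cst (b 0)) (discounted_bounded_cvg0 g01 aB); rewrite subr0; exact.
have f_cvg : cvgn (fun n => - \sum_(0 <= t < n.+1) f t)%E.
  have /cvg_ex [l fl] := is_cvg_nneseries (P := predT) (N := 0) (fun n _ _ => f0 n).
  by apply/cvg_ex; exists (- l)%E; rewrite -cvg_shiftS in fl; exact: cvgeN fl.
rewrite (lim_succ_EFinD partialE y_cvg f_cvg) -[leRHS]adde0 leeD2l //.
by apply: lime_le => //; apply: nearW => n; rewrite oppe_le0; exact: sume_ge0.
Qed.

Definition is_hpolicy (R : realType) (S A : finType) (pol : hpolicy S A R) :=
  forall h x, is_dist (pol h x).

Definition action_mean (R : realType) (S A : finType) (pol : hpolicy S A R)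
    (Q : S -> A -> R) (h : seq (S * A)) (s : S) : R :=
  \sum_(a : A) pol h s a * Q s a.

Lemma det_pol_hpolicy {R : realType} (S A : finType) (f : seq (S * A) -> S -> A) :
  is_hpolicy (@det_pol R S A f).
Proof. by move=> h x; exact: indicator_dist. Qed.

Lemma first_then_hpolicy (R : realType) (S A : finType) (a0 : A)
    (pol : hpolicy S A R) :
  is_hpolicy pol -> is_hpolicy (first_then a0 pol).
Proof. by move=> pol_dist [|y h] x; [exact: indicator_dist | exact: pol_dist]. Qed.

Lemma stat_pol_hpolicy (R : realType) (S A : finType) (pi : S -> A -> R) :
  is_policy pi -> is_hpolicy (stat_pol pi).
Proof. by move=> pi_dist h; exact: pi_dist. Qed.

Lemma action_mean_det (R : realType) (S A : finType) (f : seq (S * A) -> S -> A)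
    (Q : S -> A -> R) h s :
  action_mean (@det_pol R S A f) Q h s = Q s (f h s).
Proof. exact: sum_indicator. Qed.

Lemma action_mean_first (R : realType) (S A : finType) (a0 : A)
    (pol : hpolicy S A R) (Q : S -> A -> R) s :
  action_mean (first_then a0 pol) Q [::] s = Q s a0.
Proof. exact: sum_indicator. Qed.

Lemma sum_tuple0 (R : realType) (T : finType) (F : 0.-tuple T -> R) :
  \sum_(h : 0.-tuple T) F h = F [tuple].
Proof. by rewrite (big_pred1 [tuple]) // => h; apply/esym/eqP/tuple0. Qed.

Lemma sum_tupleS (R : realType) (T : finType) n (F : n.+1.-tuple T -> R) :
  \sum_(h : n.+1.-tuple T) F h =
  \sum_(x : T) \sum_(h : n.-tuple T) F [tuple of x :: h].
Proof.
rewrite pair_big /=.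
rewrite (reindex (fun p : T * n.-tuple T => [tuple of p.1 :: p.2])) //=.
exists (fun t : n.+1.-tuple T => (thead t, [tuple of behead t])).
  by move=> [x h] _ /=; rewrite theadE; congr pair; exact: val_inj.
by move=> t _; rewrite [RHS]tuple_eta.
Qed.

Section TrajectoryLaw.
Variables (R : realType) (S A : finType).
Variables (pol : hpolicy S A R) (Pt : kseq S A R) (s0 : S).
Hypotheses (pol_dist : is_hpolicy pol) (Pt_dist : admissible_kseq Pt).

(* [state_mean V t] and [pair_mean Q t] are E[V(s_t)] and E[Q(s_t, a_t)]:
   histories of length [t] are enumerated as [t]-tuples. *)
Definition state_mean (V : S -> R) (t : nat) : R :=
  \sum_(h : t.-tuple (S * A)) \sum_(s : S) hprob pol Pt s0 h s * V s.

Definition pair_mean (Q : S -> A -> R) (t : nat) : R :=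
  \sum_(h : t.-tuple (S * A)) \sum_(s : S)
    hprob pol Pt s0 h s * action_mean pol Q h s.

Lemma hprob_ge0 h s : 0 <= hprob pol Pt s0 h s.
Proof.
elim: h s => [|[x a] h IH] s /=; first by rewrite ler0n.
by rewrite !mulr_ge0 //; [case: (pol_dist h x) | case: (Pt_dist (size h) x a)].
Qed.

Lemma sum_hprob_succ (G : S -> R) t :
  \sum_(h : t.+1.-tuple (S * A)) \sum_(s : S) hprob pol Pt s0 h s * G s =
  \sum_(h : t.-tuple (S * A)) \sum_(x : S) \sum_(a : A)
     hprob pol Pt s0 h x * pol h x a * expect (Pt t x a) G.
Proof.
rewrite sum_tupleS exchange_big /=; apply: eq_bigr => h _.
rewrite [RHS]pair_big /=; apply: eq_bigr => -[x a] _ /=.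
by rewrite size_tuple /expect mulr_sumr; apply: eq_bigr => s _; ring.
Qed.

Lemma hprob_mean_le (G1 G2 : seq (S * A) -> S -> R) t :
  (forall (h : t.-tuple (S * A)) s, G1 h s <= G2 h s) ->
  \sum_(h : t.-tuple (S * A)) \sum_(s : S) hprob pol Pt s0 h s * G1 h s <=
  \sum_(h : t.-tuple (S * A)) \sum_(s : S) hprob pol Pt s0 h s * G2 h s.
Proof.
by move=> G12; do 2 (apply: ler_sum => ? _); rewrite ler_wpM2l ?hprob_ge0.
Qed.

Lemma state_mean_le_pair_mean (V : S -> R) (Q : S -> A -> R) t :
  (forall (h : t.-tuple (S * A)) s, V s <= action_mean pol Q h s) ->
  state_mean V t <= pair_mean Q t.
Proof. exact: (@hprob_mean_le (fun _ => V) (action_mean pol Q) t). Qed.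

Lemma pair_mean_le_state_mean (V : S -> R) (Q : S -> A -> R) t :
  (forall (h : t.-tuple (S * A)) s, action_mean pol Q h s <= V s) ->
  pair_mean Q t <= state_mean V t.
Proof. exact: (@hprob_mean_le (action_mean pol Q) (fun _ => V) t). Qed.

Lemma state_mean_cst (c : R) t : state_mean (fun _ => c) t = c.
Proof.
elim: t => [|t IH]; first by rewrite /state_mean sum_tuple0 sum_indicator.
rewrite /state_mean sum_hprob_succ -[RHS]IH; apply: eq_bigr => h _.
apply: eq_bigr => x _.
under eq_bigr do rewrite expect_cst (proj2 (Pt_dist _ _ _)) mul1r -mulrA.
by rewrite -mulr_sumr -mulr_suml (proj2 (pol_dist h x)) mul1r.
Qed.

Lemma state_mean_le (V W : S -> R) t :
  (forall s, V s <= W s) -> state_mean V t <= state_mean W t.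
Proof.
by move=> VW; exact: (@hprob_mean_le (fun _ => V) (fun _ => W) t (fun _ => VW)).
Qed.

Lemma state_mean_norm_le (V : S -> R) (B : R) t :
  (forall s, `|V s| <= B) -> `|state_mean V t| <= B.
Proof.
move=> VB; rewrite ler_norml; apply/andP; split.
- rewrite -[X in X <= _](state_mean_cst (- B) t).
  by apply: state_mean_le => s; have := VB s; rewrite ler_norml => /andP[].
- rewrite -[X in _ <= X](state_mean_cst B t).
  by apply: state_mean_le => s; have := VB s; rewrite ler_norml => /andP[].
Qed.

Lemma pair_mean0 (Q : S -> A -> R) :
  pair_mean Q 0 = action_mean pol Q [::] s0.
Proof. by rewrite /pair_mean sum_tuple0 sum_indicator. Qed.

Lemma pair_mean_subr_state_mean (Q : S -> A -> R) (V : S -> R) (g : R) t :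
  pair_mean Q t - g * state_mean V t.+1 =
  \sum_(h : t.-tuple (S * A)) \sum_(s : S) \sum_(a : A)
    hprob pol Pt s0 h s * pol h s a * (Q s a - g * expect (Pt t s a) V).
Proof.
rewrite /pair_mean /state_mean sum_hprob_succ mulr_sumr -sumrB.
apply: eq_bigr => h _; rewrite mulr_sumr -sumrB; apply: eq_bigr => s _.
rewrite /action_mean !mulr_sumr -sumrB; apply: eq_bigr => a _; ring.
Qed.

End TrajectoryLaw.

Lemma norm_le_sum_norm (R : realType) (S : finType) (V : S -> R) s :
  `|V s| <= \sum_x `|V x|.
Proof. by rewrite (bigD1 s) //= lerDl sumr_ge0. Qed.

Section BellmanBounds.
Variables (R : realType) (S A : finType) (P : S -> A -> S -> R).
Variables (r : S -> A -> R) (gamma : R) (sigma : (S -> R) -> (S -> R) -> R).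
Hypothesis gamma01 : 0 <= gamma < 1.
Hypothesis sigma_risk : forall s a, convex_risk_measure (sigma (P s a)).

Local Notation Q := (Qtilde P r gamma sigma).

Definition penalty_attaining (V : S -> R) (Ph : S -> A -> S -> R) : Prop :=
  (forall s a, is_dist (Ph s a)) /\
  forall s a, penalty sigma (P s a) (Ph s a) =
              (- sigma (P s a) V - expect (Ph s a) V)%:E.

Lemma penalty_attaining_exists (V : S -> R) :
  exists Ph, penalty_attaining V Ph.
Proof.
have attained s : exists g : A -> S -> R, forall a, is_dist (g a) /\
    penalty sigma (P s a) (g a) = (- sigma (P s a) V - expect (g a) V)%:E.
  by have [g g_att] := boolp.choice (fun a => penalty_attained V (sigma_risk s a));
     exists g.
have [Ph Ph_att] := boolp.choice attained.
by exists Ph; split => s a; case: (Ph_att s a).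
Qed.

Lemma argmin_penalty_attaining (V : S -> R) (Ph : S -> A -> S -> R) :
  (forall s a, is_argmin_kernel sigma (P s a) V (Ph s a)) ->
  penalty_attaining V Ph.
Proof.
move=> Ph_min; split=> s a; first by case: (Ph_min s a).
exact: argmin_kernel_penalty (sigma_risk s a) (Ph_min s a).
Qed.

Lemma exp_cost_ge (pol : hpolicy S A R) (Pt : kseq S A R) s0 (V : S -> R) t :
  is_hpolicy pol -> admissible_kseq Pt ->
  ((pair_mean pol Pt s0 (Q V) t - gamma * state_mean pol Pt s0 V t.+1)%:E
     <= exp_cost P r gamma sigma pol Pt s0 t)%E.
Proof.
move=> pol_dist Pt_dist; have g0 : 0 <= gamma by case/andP: gamma01.
rewrite pair_mean_subr_state_mean /exp_cost -sumEFin; apply: lee_sum => h _.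
rewrite -sumEFin; apply: lee_sum => s _; rewrite -sumEFin; apply: lee_sum => a _.
rewrite EFinM; apply: lee_wpmul2l.
  by rewrite lee_fin mulr_ge0 ?hprob_ge0 //; case: (pol_dist h s).
have -> : Q V s a - gamma * expect (Pt t s a) V =
    r s a + gamma * (- sigma (P s a) V - expect (Pt t s a) V).
  by rewrite /Qtilde; ring.
rewrite /stage_cost EFinD EFinM leeD2l // lee_wpmul2l ?lee_fin //.
exact: le_penalty.
Qed.

Lemma exp_cost_attaining (pol : hpolicy S A R) (Ph : S -> A -> S -> R) s0
    (V : S -> R) t :
  penalty_attaining V Ph ->
  exp_cost P r gamma sigma pol (fun _ => Ph) s0 t =
  (pair_mean pol (fun _ => Ph) s0 (Q V) t
     - gamma * state_mean pol (fun _ => Ph) s0 V t.+1)%:E.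
Proof.
case=> _ Ph_att; rewrite pair_mean_subr_state_mean /exp_cost -sumEFin.
apply: eq_bigr => h _; rewrite -sumEFin; apply: eq_bigr => s _.
rewrite -sumEFin; apply: eq_bigr => a _.
rewrite /stage_cost Ph_att -[(gamma%:E * _)%E]EFinM -EFinD -EFinM; congr EFin.
by rewrite /Qtilde; ring.
Qed.

Lemma total_cost_ge (pol : hpolicy S A R) (Pt : kseq S A R) s0 (V : S -> R) :
  is_hpolicy pol -> admissible_kseq Pt ->
  (forall h s, (0 < size h)%N -> V s <= action_mean pol (Q V) h s) ->
  ((action_mean pol (Q V) [::] s0)%:E <= total_cost P r gamma sigma pol Pt s0)%E.
Proof.
move=> pol_dist Pt_dist V_le.
rewrite -(pair_mean0 pol Pt s0) /total_cost.
apply: (discounted_series_ge (a := state_mean pol Pt s0 V) (B := \sum_x `|V x|)).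
- exact: gamma01.
- by move=> t; apply: (state_mean_norm_le s0 pol_dist Pt_dist) => s;
     exact: norm_le_sum_norm.
- by move=> t; exact: exp_cost_ge.
- move=> t t0; apply: (state_mean_le_pair_mean s0 pol_dist Pt_dist) => h s.
  by apply: V_le; rewrite size_tuple.
Qed.

Lemma total_cost_le (pol : hpolicy S A R) (Ph : S -> A -> S -> R) s0
    (V : S -> R) :
  is_hpolicy pol -> penalty_attaining V Ph ->
  (forall h s, (0 < size h)%N -> action_mean pol (Q V) h s <= V s) ->
  (total_cost P r gamma sigma pol (fun _ => Ph) s0
     <= (action_mean pol (Q V) [::] s0)%:E)%E.
Proof.
move=> pol_dist Ph_att V_ge; have Ph_dist : admissible_kseq (fun _ => Ph).
  by move=> t s a; case: Ph_att => + _; apply.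
rewrite -(pair_mean0 pol (fun _ => Ph) s0) /total_cost.
apply: (discounted_series_le (a := state_mean pol (fun _ => Ph) s0 V)
                             (B := \sum_x `|V x|)).
- exact: gamma01.
- by move=> t; apply: (state_mean_norm_le s0 pol_dist Ph_dist) => s;
     exact: norm_le_sum_norm.
- by move=> t; exact: exp_cost_attaining.
- move=> t t0; apply: (pair_mean_le_state_mean s0 pol_dist Ph_dist) => h s.
  by apply: V_ge; rewrite size_tuple.
Qed.

Lemma adv_inf_ge (pol : hpolicy S A R) s0 (V : S -> R) :
  is_hpolicy pol ->
  (forall h s, (0 < size h)%N -> V s <= action_mean pol (Q V) h s) ->
  ((action_mean pol (Q V) [::] s0)%:E <= adv_inf P r gamma sigma pol s0)%E.
Proof.
by move=> pol_dist V_le; apply: le_ereal_inf_tmp => _ [Pt Pt_dist <-];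
   exact: total_cost_ge.
Qed.

Lemma adv_inf_le (pol : hpolicy S A R) s0 (V : S -> R) :
  is_hpolicy pol ->
  (forall h s, (0 < size h)%N -> action_mean pol (Q V) h s <= V s) ->
  (adv_inf P r gamma sigma pol s0 <= (action_mean pol (Q V) [::] s0)%:E)%E.
Proof.
move=> pol_dist V_ge; have [Ph Ph_att] := penalty_attaining_exists V.
apply: ge_ereal_inf; exists (total_cost P r gamma sigma pol (fun _ => Ph) s0).
  by exists (fun _ => Ph) => // t s a; case: Ph_att => + _; apply.
exact: total_cost_le.
Qed.

Lemma adv_inf_bellman (pol : hpolicy S A R) s0 (V : S -> R) :
  is_hpolicy pol ->
  (forall h s, (0 < size h)%N -> action_mean pol (Q V) h s = V s) ->
  adv_inf P r gamma sigma pol s0 = (action_mean pol (Q V) [::] s0)%:E.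
Proof.
move=> pol_dist V_eq; apply/le_anti/andP; split.
- by apply: adv_inf_le => // h s hs; rewrite V_eq.
- by apply: adv_inf_ge => // h s hs; rewrite V_eq.
Qed.

Lemma total_cost_argmin (pol : hpolicy S A R) (Ph : S -> A -> S -> R) s0
    (V : S -> R) :
  is_hpolicy pol -> (forall s a, is_argmin_kernel sigma (P s a) V (Ph s a)) ->
  (forall h s, (0 < size h)%N -> action_mean pol (Q V) h s = V s) ->
  total_cost P r gamma sigma pol (fun _ => Ph) s0 =
  (action_mean pol (Q V) [::] s0)%:E.
Proof.
move=> pol_dist /argmin_penalty_attaining Ph_att V_eq.
apply/le_anti/andP; split.
- by apply: total_cost_le => // h s hs; rewrite V_eq.
- apply: total_cost_ge => //; last by move=> h s hs; rewrite V_eq.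
  by move=> t s a; case: Ph_att => + _; apply.
Qed.

End BellmanBounds.

Section RobustValues.
Variables (R : realType) (S A : finType) (P : S -> A -> S -> R).
Variables (r : S -> A -> R) (gamma : R) (sigma : (S -> R) -> (S -> R) -> R).
Hypothesis gamma01 : 0 <= gamma < 1.
Hypothesis sigma_risk : forall s a, convex_risk_measure (sigma (P s a)).

Local Notation Q := (Qtilde P r gamma sigma).

Section Optimal.
Variable Vstar : S -> R.
Hypothesis Vstar_opt : is_Vtilde_star P r gamma sigma Vstar.

Lemma greedy_action_exists :
  exists f : S -> A, forall s, Q Vstar s (f s) = Vstar s.
Proof.
have [f fE] := boolp.choice (fun s => (Vstar_opt s).1).
by exists f => s; rewrite -fE.
Qed.

Lemma adv_inf_det_tail_le (f : seq (S * A) -> S -> A) (pol : hpolicy S A R) s :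
  is_hpolicy pol ->
  (forall h x, (0 < size h)%N -> pol h x = @det_pol R S A f h x) ->
  (adv_inf P r gamma sigma pol s <= (action_mean pol (Q Vstar) [::] s)%:E)%E.
Proof.
move=> pol_dist pol_tail; apply: (adv_inf_le gamma01 sigma_risk) => // h x hx.
have -> : action_mean pol (Q Vstar) h x = Q Vstar x (f h x).
  by rewrite /action_mean pol_tail //; exact: action_mean_det.
by case: (Vstar_opt x).
Qed.

Lemma adv_inf_greedy_tail (f : S -> A) (pol : hpolicy S A R) s :
  (forall x, Q Vstar x (f x) = Vstar x) -> is_hpolicy pol ->
  (forall h x, (0 < size h)%N -> pol h x = @det_pol R S A (fun _ => f) h x) ->
  adv_inf P r gamma sigma pol s = (action_mean pol (Q Vstar) [::] s)%:E.
Proof.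
move=> f_greedy pol_dist pol_tail.
apply: (adv_inf_bellman gamma01 sigma_risk) => // h x hx.
rewrite -f_greedy /action_mean pol_tail //; exact: action_mean_det.
Qed.

Lemma Vbar_star_eq s : Vbar_star P r gamma sigma s = (Vstar s)%:E.
Proof.
have [f0 f0_greedy] := greedy_action_exists.
apply/le_anti/andP; rewrite /Vbar_star; split.
- apply: ge_ereal_sup => _ [f _ <-].
  apply: le_trans
    (adv_inf_det_tail_le s (det_pol_hpolicy f) (fun _ _ _ => erefl)) _.
  by rewrite action_mean_det lee_fin; case: (Vstar_opt s).
- have <- : adv_inf P r gamma sigma (@det_pol R S A (fun _ => f0)) s = (Vstar s)%:E.
    rewrite (adv_inf_greedy_tail s f0_greedy (det_pol_hpolicy _)) //.
    by rewrite action_mean_det f0_greedy.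
  by apply: ereal_sup_ubound; exists (fun _ => f0).
Qed.

Lemma Qbar_star_eq s a :
  Qbar_star P r gamma sigma s a = (Q Vstar s a)%:E.
Proof.
have [f0 f0_greedy] := greedy_action_exists.
have first_dist f := first_then_hpolicy a (@det_pol_hpolicy R S A f).
apply/le_anti/andP; rewrite /Qbar_star; split.
- apply: ge_ereal_sup => _ [f _ <-].
  rewrite -(action_mean_first a (@det_pol R S A f)).
  by apply: (adv_inf_det_tail_le s (first_dist f)) => -[|y h] x.
- have <- : adv_inf P r gamma sigma (first_then a (@det_pol R S A (fun _ => f0))) s
            = (Q Vstar s a)%:E.
    rewrite (adv_inf_greedy_tail s f0_greedy (first_dist _)) ?action_mean_first //.
    by move=> -[|y h] x.
  by apply: ereal_sup_ubound; exists (fun _ => f0).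
Qed.

Lemma greedy_argmin_attains (pistar : S -> A) (Phat : S -> A -> S -> R) s :
  (forall s a, Q Vstar s a <= Q Vstar s (pistar s)) ->
  (forall s a, is_argmin_kernel sigma (P s a) Vstar (Phat s a)) ->
  adv_inf P r gamma sigma (@det_pol R S A (fun _ x => pistar x)) s
    = Vbar_star P r gamma sigma s /\
  total_cost P r gamma sigma (@det_pol R S A (fun _ x => pistar x))
    (fun _ => Phat) s = Vbar_star P r gamma sigma s.
Proof.
move=> pistar_max Phat_min.
have pistar_greedy x : Q Vstar x (pistar x) = Vstar x.
  case: (Vstar_opt x) => [[a Va] Q_le]; apply/le_anti.
  by rewrite Q_le /= Va pistar_max.
have pistar_bellman h x (_ : (0 < size h)%N) :
    action_mean (@det_pol R S A (fun _ x => pistar x)) (Q Vstar) h x = Vstar x.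
  by rewrite action_mean_det pistar_greedy.
have pol_dist := @det_pol_hpolicy R S A (fun _ x => pistar x).
rewrite Vbar_star_eq (adv_inf_bellman gamma01 sigma_risk _ pol_dist pistar_bellman).
rewrite (total_cost_argmin gamma01 sigma_risk _ pol_dist Phat_min pistar_bellman).
by rewrite action_mean_det pistar_greedy.
Qed.

End Optimal.

Section Stationary.
Variables (pi : S -> A -> R) (Vpi : S -> R).
Hypotheses (pi_dist : is_policy pi) (Vpi_eq : is_Vtilde_pi P r gamma sigma pi Vpi).

Lemma stat_pol_bellman h s : action_mean (stat_pol pi) (Q Vpi) h s = Vpi s.
Proof. exact/esym/Vpi_eq. Qed.

Lemma Vbar_pi_eq s : Vbar_pi P r gamma sigma pi s = (Vpi s)%:E.
Proof.
rewrite /Vbar_pi (adv_inf_bellman gamma01 sigma_risk _ (V := Vpi)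
  (stat_pol_hpolicy pi_dist)).
  by rewrite stat_pol_bellman.
by move=> h x _; exact: stat_pol_bellman.
Qed.

Lemma Qbar_pi_eq s a : Qbar_pi P r gamma sigma pi s a = (Q Vpi s a)%:E.
Proof.
rewrite /Qbar_pi (adv_inf_bellman gamma01 sigma_risk _ (V := Vpi)
  (first_then_hpolicy a (stat_pol_hpolicy pi_dist))) ?action_mean_first //.
by move=> -[|y h] x // _; exact: stat_pol_bellman.
Qed.

Lemma argmin_attains_Vbar_pi (Phat : S -> A -> S -> R) s :
  (forall s a, is_argmin_kernel sigma (P s a) Vpi (Phat s a)) ->
  total_cost P r gamma sigma (stat_pol pi) (fun _ => Phat) s =
  Vbar_pi P r gamma sigma pi s.
Proof.
move=> Phat_min; rewrite Vbar_pi_eq.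
rewrite (total_cost_argmin gamma01 sigma_risk _ (stat_pol_hpolicy pi_dist) Phat_min).
  by rewrite stat_pol_bellman.
by move=> h x _; exact: stat_pol_bellman.
Qed.

End Stationary.

End RobustValues.

Unset Implicit Arguments.

Theorem mainTheorem3 (R : realType) (S A : finType)
  (P : S -> A -> S -> R) (hP : forall s a, is_dist (P s a))
  (r : S -> A -> R) (hr : forall s a, 0 <= r s a <= 1)
  (gamma : R) (hgamma : 0 <= gamma < 1)
  (sigma : (S -> R) -> (S -> R) -> R)
  (hsigma : forall s a, convex_risk_measure (sigma (P s a)))
  (Vstar : S -> R) (hVstar : is_Vtilde_star P r gamma sigma Vstar) :
  (forall s, Vbar_star P r gamma sigma s = (Vstar s)%:E) /\
  (forall s a, Qbar_star P r gamma sigma s a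
               = (Qtilde P r gamma sigma Vstar s a)%:E) /\
  (forall (pistar : S -> A),
     (forall s a, Qtilde P r gamma sigma Vstar s a
                  <= Qtilde P r gamma sigma Vstar s (pistar s)) ->
   forall (Phat : S -> A -> S -> R),
     (forall s a, is_argmin_kernel sigma (P s a) Vstar (Phat s a)) ->
   forall s,
     adv_inf P r gamma sigma (@det_pol R S A (fun _ x => pistar x)) s
       = Vbar_star P r gamma sigma s /\
     total_cost P r gamma sigma (@det_pol R S A (fun _ x => pistar x))
       (fun _ => Phat) s = Vbar_star P r gamma sigma s) /\
  (forall (pi : S -> A -> R), is_policy pi ->
   forall (Vpi : S -> R), is_Vtilde_pi P r gamma sigma pi Vpi ->
     (forall s, Vbar_pi P r gamma sigma pi s = (Vpi s)%:E) /\
     (forall s a, Qbar_pi P r gamma sigma pi s a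
                  = (Qtilde P r gamma sigma Vpi s a)%:E) /\
     (forall (Phat : S -> A -> S -> R),
        (forall s a, is_argmin_kernel sigma (P s a) Vpi (Phat s a)) ->
      forall s, total_cost P r gamma sigma (stat_pol pi) (fun _ => Phat) s
                = Vbar_pi P r gamma sigma pi s)).
Proof.
split; first exact: (Vbar_star_eq hgamma hsigma hVstar).
split; first exact: (Qbar_star_eq hgamma hsigma hVstar).
split.
  move=> pistar pistar_max Phat Phat_min s.
  exact: (greedy_argmin_attains hgamma hsigma hVstar s pistar_max Phat_min).
move=> pi pi_dist Vpi Vpi_eq.
split; first exact: (Vbar_pi_eq hgamma hsigma pi_dist Vpi_eq).
split; first exact: (Qbar_pi_eq hgamma hsigma pi_dist Vpi_eq).
move=> Phat Phat_min s.
exact: (argmin_attains_Vbar_pi hgamma hsigma pi_dist Vpi_eq s Phat_min).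
Qed.
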